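(* Let $m,n,p,c$ be positive integers. The number of lattice paths from $(0,0)$ to $(m-pn,m+n)$ using the steps $(1,1)$ and $(-p,1)$ in the plane that do not intersect the line $x=c$ equals $|\mathcal{L}_{p,c+pn-m}(0,0;n,m)|$, the number of lattice paths from $(0,0)$ to $(n,m)$ with unit steps $(1,0)$ and $(0,1)$ that stay strictly above the line $y=px-(c+pn-m)$.
   Context: A path with steps $(1,1)$ and $(-p,1)$ is regarded as the polygonal curve formed by its steps; it intersects the line $x=c$ if it touches or crosses that line. A path with steps $(1,0),(0,1)$ stays strictly above the line $y=px-v$ if every lattice point $(x,y)$ on it satisfies $y>px-v$. *)

From mathcomp Require Import all_boot all_order all_algebra.
Set Implicit Arguments. Unset Strict Implicit. Unset Printing Implicit Defensive.
Import Order.TTheory GRing.Theory Num.Theory.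
Local Open Scope ring_scope.

(* ---------- Paths with steps (1,1) and (-p,1) ----------
   A path is a sequence of steps s : seq bool, true = (1,1), false = (-p,1).
   Its k-th vertex (0 <= k <= size s) is (xA p s k, k). *)
Definition xA (p : nat) (s : seq bool) (k : nat) : int :=
  (count id (take k s))%:Z - (p * count negb (take k s))%:Z.

(* The polygonal curve meets the vertical line x = c iff some step segment
   [v_i, v_{i+1}] has c between the x-coordinates of its endpoints
   (touching or crossing). *)
Definition meets_vline (p : nat) (c : int) (s : seq bool) : bool :=
  [exists i : 'I_(size s),
     ((xA p s i <= c) && (c <= xA p s i.+1))
  || ((xA p s i.+1 <= c) && (c <= xA p s i))].

Definition xE (s : seq bool) (k : nat) : int := (count id (take k s))%:Z.
Definition yE (s : seq bool) (k : nat) : int := (count negb (take k s))%:Z.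

Definition strictly_above (p : nat) (v : int) (s : seq bool) : bool :=
  [forall k : 'I_(size s).+1, yE s k > p%:Z * xE s k - v].

From mathcomp Require Import all_boot all_order all_algebra.
From mathcomp Require Import zify.
Import Order.TTheory GRing.Theory Num.Theory.
Local Open Scope ring_scope.

(* Reverse a path and exchange its two kinds of steps: (1,1) becomes (0,1)
   and (-p,1) becomes (1,0).  The point reached after the last k steps of the
   reversed path is (D, U), where U and D count the two kinds of steps in the
   corresponding suffix of the original path, so its height above the line
   y = p x - v is U - p D + v = x_end - x_prefix + v.  For v = c + p n - m and
   x_end = m - p n this is c - x_prefix: "strictly above" means that every
   vertex lies left of x = c, which, as x grows by at most 1 per step from
   x = 0 < c, means never touching x = c.  The endpoint condition
   x_end = m - p n forces exactly n steps (-p,1) among the m + n steps. *)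

Definition rev_compl (s : seq bool) : seq bool := rev (map negb s).

Lemma rev_complK : involutive rev_compl.
Proof.
by move=> s; rewrite /rev_compl map_rev revK -map_comp (eq_map negbK) map_id.
Qed.

Lemma size_rev_compl s : size (rev_compl s) = size s.
Proof. by rewrite size_rev size_map. Qed.

Lemma count_id_negb s : (count id s + count negb s)%N = size s.
Proof. by rewrite -(count_predC id). Qed.

Lemma xA_succ_le p s k : xA p s k.+1 <= xA p s k + 1.
Proof.
have [ks | sk] := ltnP k (size s).
  rewrite /xA (take_nth false ks) -cats1 !count_cat /=.
  by case: (nth false s k) => /=; lia.
by rewrite /xA !take_oversize ?(leqW sk) //; lia.
Qed.

Lemma xA_size p s : xA p s (size s) = (count id s)%:Z - (p * count negb s)%:Z.
Proof. by rewrite /xA take_size. Qed.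

Lemma meets_vlineN p (c : int) s : 0 < c ->
  ~~ meets_vline p c s = [forall k : 'I_(size s).+1, xA p s k < c].
Proof.
move=> c_gt0; rewrite /meets_vline negb_exists; apply/forallP/forallP.
- move=> no_meet [k /= +]; rewrite ltnS.
  elim: k => [|k IHk] k_le; first by rewrite /xA take0 /=; lia.
  have := no_meet (Ordinal k_le); have := xA_succ_le p s k.
  by have := IHk (ltnW k_le); rewrite /=; lia.
- move=> left_of [i /= i_lt].
  have := left_of (Ordinal (leqW i_lt)).
  by have := left_of (Ordinal (i_lt : i.+1 < (size s).+1)%N); rewrite /=; lia.
Qed.

Lemma xE_rev_compl s k :
  xE (rev_compl s) k = (count negb (drop (size s - k) s))%:Z.
Proof. by rewrite /xE take_rev size_map count_rev -map_drop count_map. Qed.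

Lemma yE_rev_compl s k :
  yE (rev_compl s) k = (count id (drop (size s - k) s))%:Z.
Proof.
rewrite /yE take_rev size_map count_rev -map_drop count_map.
by congr (_%:Z); apply: eq_count => b /=; rewrite negbK.
Qed.

Lemma forall_rev_ord N (P : pred nat) :
  [forall k : 'I_N.+1, P (N - k)%N] = [forall k : 'I_N.+1, P k].
Proof.
have rev_ordE (k : 'I_N.+1) : (N - rev_ord k)%N = k.
  by rewrite /= subSS subKn // -ltnS.
apply/forallP/forallP => P_all k; have := P_all (rev_ord k).
  by rewrite rev_ordE.
by rewrite /= subSS.
Qed.

Lemma strictly_above_rev_compl p v s :
  strictly_above p v (rev_compl s) =
  [forall k : 'I_(size s).+1, xA p s k < xA p s (size s) + v].
Proof.
rewrite /strictly_above size_rev_compl xA_size.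
rewrite -(forall_rev_ord _ (fun k => xA p s k < _ + v)).
apply: eq_forallb => k /=; rewrite xE_rev_compl yE_rev_compl /xA.
move: (size s - k)%N => j.
have := count_cat id (take j s) (drop j s).
have := count_cat negb (take j s) (drop j s).
rewrite cat_take_drop => split_negb split_id.
rewrite split_negb mulnDr; apply/idP/idP; lia.
Qed.

Lemma xA_size_eq p m n s : size s = (m + n)%N ->
  (xA p s (size s) == m%:Z - (p * n)%:Z) = (count negb s == n).
Proof.
move=> s_size; rewrite xA_size; have := count_id_negb s.
rewrite s_size => count_size; apply/eqP/eqP => [|b_eq]; last by lia.
nia.
Qed.

Lemma card_rev_compl_tuple N1 N2
    (A : {set N1.-tuple bool}) (B : {set N2.-tuple bool}) :
  N1 = N2 ->
  (forall (s : N1.-tuple bool) (t : N2.-tuple bool),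
     t = rev_compl s :> seq bool -> (s \in A) = (t \in B)) ->
  #|A| = #|B|.
Proof.
move=> N12 AB; subst N2.
have size_f (s : N1.-tuple bool) : size (rev_compl s) == N1.
  by rewrite size_rev_compl size_tuple.
pose f s := Tuple (size_f s).
have f_inj : injective f.
  by apply: (can_inj (g := f)) => s; apply: val_inj; rewrite /= rev_complK.
rewrite -(card_preimset B f_inj); apply: eq_card => s.
by rewrite inE (AB s (f s)).
Qed.

Lemma avoids_vline_rev_compl p m n (c : int) s :
  size s = (m + n)%N -> 0 < c ->
  (xA p s (m + n) == m%:Z - (p * n)%:Z) && ~~ meets_vline p c s =
  (xE (rev_compl s) (n + m) == n%:Z) && (yE (rev_compl s) (n + m) == m%:Z) &&
  strictly_above p (c + (p * n)%:Z - m%:Z) (rev_compl s).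
Proof.
move=> s_size c_gt0; rewrite [(n + m)%N]addnC -s_size.
rewrite xE_rev_compl yE_rev_compl subnn drop0.
rewrite meets_vlineN // strictly_above_rev_compl xA_size_eq //.
rewrite !eqz_nat; have [b_eq | b_neq] := eqVneq (count negb s) n; last by [].
have a_eq : count id s = m by have := count_id_negb s; lia.
rewrite a_eq eqxx xA_size a_eq b_eq.
by apply: eq_forallb => k; congr (_ < _); lia.
Qed.

Theorem theorem3p1 (m n p c : nat) :
  (0 < m)%N -> (0 < n)%N -> (0 < p)%N -> (0 < c)%N ->
  #|[set s : (m + n).-tuple bool |
      (xA p s (m + n) == m%:Z - (p * n)%:Z) && ~~ meets_vline p c%:Z s]|
  = #|[set s : (n + m).-tuple bool |
      (xE s (n + m) == n%:Z) && (yE s (n + m) == m%:Z) &&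
      strictly_above p (c%:Z + (p * n)%:Z - m%:Z) s]|.
Proof.
move=> _ _ _ c_gt0; apply: card_rev_compl_tuple; first exact: addnC.
move=> s t t_eq; rewrite !inE t_eq.
by apply: avoids_vline_rev_compl; rewrite ?size_tuple ?ltz_nat.
Qed.
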